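(* Let $H$ be a connected finite loopless graph with a marked vertex $v_0$ and $L$ a connected finite graph with at least $\deg_H(v_0)$ vertices. Let $G$ be obtained from $H$ by deleting $v_0$, adding a disjoint copy of $L$, and attaching each edge of $H$ formerly incident to $v_0$ to a vertex of $L$, distinct edges to distinct vertices. If $L$ has two edge-disjoint spanning trees (i.e. $M(L)$ has two disjoint bases), then $f(M(G))\le f(M(H))$.
   Context: $M(K)$ denotes the graphic matroid of a graph $K$ (bases: edge sets of spanning trees for connected $K$). For a matroid $M$, the distance between bases $B,B'$ is $|B\triangle B'|$; the Borsuk number $f(M)$ is the minimum number of parts in a partition of the set of bases in which each part has diameter strictly smaller than the diameter of the set of all bases ($f(M)=+\infty$ if $M$ has exactly one basis). *)

From mathcomp Require Import all_boot all_order.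
Set Implicit Arguments. Unset Strict Implicit. Unset Printing Implicit Defensive.

(* Finite multigraphs: a finite vertex type V, a finite edge type E and an
   endpoint map  ends : E -> V * V  (orientation irrelevant; loops are the
   edges with equal endpoints, parallel edges are allowed). *)

Section Graph.
Variables (V E : finType) (ends : E -> V * V).

Definition adj (F : {set E}) : rel V :=
  fun x y => [exists e in F, (ends e == (x, y)) || (ends e == (y, x))].

Definition loopless : bool := [forall e, (ends e).1 != (ends e).2].

Definition connectedg : bool := [forall x, [forall y, connect (adj setT) x y]].

(* F contains no cycle: no edge of F has its endpoints joined by a path of
   the other edges of F (a loop is a cycle, as is a pair of parallel edges). *)
Definition acyclic (F : {set E}) : bool :=
  [forall e in F, ~~ connect (adj (F :\ e)) (ends e).1 (ends e).2].

(* bases of the graphic matroid M(K): maximal forests (= spanning trees when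
   K is connected) *)
Definition is_basis (F : {set E}) : bool :=
  acyclic F && [forall e, (e \notin F) ==> ~~ acyclic (e |: F)].

Definition bases : {set {set E}} := [set F | is_basis F].

Definition incident (v : V) (e : E) : bool :=
  ((ends e).1 == v) || ((ends e).2 == v).
Definition degree (v : V) : nat := #|[set e | incident v e]|.

End Graph.

Section Borsuk.
Variable E : finType.

Definition bdist (A B : {set E}) : nat := #|(A :\: B) :|: (B :\: A)|.

Definition diam (S : {set {set E}}) : nat :=
  \max_(A in S) \max_(B in S) bdist A B.

Definition borsuk_part (bs : {set {set E}}) (k : nat) : bool :=
  [exists P : {set {set {set E}}},
     [&& partition P bs, #|P| == k & [forall S in P, diam S < diam bs]]].

Lemma borsuk_part_ex (bs : {set {set E}}) :
  #|bs| != 1 -> exists k, borsuk_part bs k.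
Proof.
move=> bs1; exists #|bs|; apply/existsP.
exists (preim_partition id bs); apply/and3P; split.
- exact: preim_partitionP.
- rewrite /preim_partition /equivalence_partition card_in_imset //.
  move=> x y xb yb /setP /(_ y); rewrite !inE yb eqxx /= => /eqP.
  by move=> ->.
- apply/forallP => S; apply/implyP => /imsetP [x xb ->].
  have -> : [set y in bs | id x == id y] = [set x].
    by apply/setP=> y; rewrite !inE eq_sym; case: eqP => [->|]; rewrite ?xb ?andbF.
  have d0 : diam [set x] = 0.
    by rewrite /diam big_set1 big_set1 /bdist !setDv setU0 cards0.
  rewrite d0.
  have : 1 < #|bs|.
    have : 0 < #|bs| by apply/card_gt0P; exists x.
    by move: bs1; case: #|bs| => [|[|n]].
  case/card_gt1P => A [B [Ab Bb AB]].
  apply: (@leq_trans (bdist A B)).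
    rewrite lt0n cards_eq0; apply: contra AB => /eqP.
    move/setP => h; apply/eqP/setP => z; move: (h z); rewrite !inE.
    by case: (z \in A); case: (z \in B).
  rewrite /diam; apply: (leq_trans _ (leq_bigmax_cond _ Ab)).
  exact: (leq_bigmax_cond _ Bb).
Qed.

(* Borsuk number: None stands for +infinity (exactly one basis) *)
Definition borsuk (bs : {set {set E}}) : option nat :=
  match boolP (#|bs| == 1) with
  | AltTrue _ => None
  | AltFalse h => Some (ex_minn (borsuk_part_ex h))
  end.

End Borsuk.

Definition borsukM (V E : finType) (ends : E -> V * V) : option nat :=
  borsuk (bases ends).

(* order on nat extended by +infinity (= None) *)
Definition ole (a b : option nat) : bool :=
  match a, b with
  | _, None => true
  | None, Some _ => false
  | Some m, Some n => m <= n
  end.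

Section Glue.
Variables (VH EH : finType) (endsH : EH -> VH * VH) (v0 : VH).
Variables (VL EL : finType) (endsL : EL -> VL * VL) (attach : EH -> VL).

Definition VG : finType := ({x : VH | x != v0} + VL)%type.
Definition EG : finType := (EH + EL)%type.

Definition glue_vertex (e : EH) (x : VH) : VG :=
  match insub x with
  | Some u => inl u
  | None => inr (attach e)
  end.

Definition endsG (e : EG) : VG * VG :=
  match e with
  | inl e => (glue_vertex e (endsH e).1, glue_vertex e (endsH e).2)
  | inr e => (inr (endsL e).1, inr (endsL e).2)
  end.

End Glue.

From mathcomp Require Import all_boot all_order.
From mathcomp Require Import zify.
Set Implicit Arguments. Unset Strict Implicit. Unset Printing Implicit Defensive.

(* Contracting L back to v0 maps every spanning tree B of G onto a connected
   spanning subgraph of H.  A spanning tree [proj_basis B] of H inside it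
   leaves exactly |V(L)| - 1 edges of B outside, so the distance of two bases
   of G exceeds that of their projections by at most 2 (|V(L)| - 1).  Gluing
   two H-trees at maximal distance to two disjoint spanning trees of L shows
   that the diameter grows by at least that much.  Hence every partition of
   the bases of H into parts of smaller diameter pulls back to a partition of
   the bases of G with no more parts. *)

Lemma connect_homo (T T' : finType) (r : rel T) (r' : rel T') (f : T -> T') :
  (forall a b, r a b -> connect r' (f a) (f b)) ->
  forall a b, connect r a b -> connect r' (f a) (f b).
Proof.
move=> rr' a b /connectP [p]; elim: p a => [|c p IHp] a /=; first by move=> _ ->.
by case/andP=> rac pc lb; apply: connect_trans (rr' _ _ rac) (IHp _ pc lb).
Qed.

Section GraphFacts.
Variables (V E : finType) (ends : E -> V * V).
Local Notation adj := (adj ends).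
Local Notation acyclic := (acyclic ends).
Local Notation is_basis := (is_basis ends).
Implicit Types (F : {set E}) (x y u v : V) (e : E).

Definition spanning F := forall x y, connect (adj F) x y.

Lemma adj_sym F : symmetric (adj F).
Proof. by move=> x y; apply/existsP/existsP => -[e]; exists e; rewrite orbC. Qed.

Lemma connect_adj_sym F : connect_sym (adj F).
Proof. exact/sym_connect_sym/adj_sym. Qed.

Lemma adjS F F' : F \subset F' -> subrel (adj F) (adj F').
Proof.
move=> sFF' x y /existsP [e /andP [eF h]]; apply/existsP; exists e.
by rewrite (subsetP sFF' _ eF).
Qed.

Lemma connectS F F' : F \subset F' -> subrel (connect (adj F)) (connect (adj F')).
Proof. by move=> sFF'; apply: connect_sub => x y /(adjS sFF') /connect1. Qed.

Lemma adj_ends F e : e \in F -> adj F (ends e).1 (ends e).2.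
Proof. by move=> eF; apply/existsP; exists e; rewrite eF -surjective_pairing eqxx. Qed.

Lemma adjP F x y :
  reflect (exists2 e, e \in F & (ends e = (x, y) \/ ends e = (y, x))) (adj F x y).
Proof.
apply: (iffP existsP) => [[e /andP [eF /orP [] /eqP h]]|[e eF [] h]]; exists e => //;
  by [left | right | rewrite eF h eqxx ?orbT].
Qed.

Lemma connectedgP : reflect (spanning setT) (connectedg ends).
Proof. exact: 'forall_forallP. Qed.

Lemma spanning_connectedg F : spanning F -> connectedg ends.
Proof. by move=> spF; apply/connectedgP => x y; apply: connectS (subsetT F) _ _ _. Qed.

Lemma acyclicS F F' : F' \subset F -> acyclic F -> acyclic F'.
Proof.
move=> sF'F /forallP acF; apply/forallP => e; apply/implyP => eF'.
by have := acF e; rewrite (subsetP sF'F _ eF') /=; apply: contra; apply/connectS/setSD.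
Qed.

Lemma acyclic0 : acyclic set0.
Proof. by apply/forallP => e; rewrite inE. Qed.

Lemma connect_setU1 F e x y u v : ends e = (x, y) ->
  connect (adj (e |: F)) u v ->
  [|| connect (adj F) u v, connect (adj F) u x && connect (adj F) y v
    | connect (adj F) u y && connect (adj F) x v].
Proof.
move=> exy /connectP [p]; elim: p u => [|w p IHp] u /=; first by move=> _ ->; rewrite connect0.
have symF := connect_adj_sym F.
case/andP=> /adjP [f]; rewrite in_setU1 => /orP [/eqP -> | fF] fuw pw lv.
  move: (IHp _ pw lv); rewrite exy in fuw; case: fuw => -[<- <-];
  case/or3P => [h|/andP [h1 h2]|/andP [h1 h2]];
  by rewrite ?connect0 ?h ?h2 ?orbT // (connect_trans _ h2) // symF.
have cuw : connect (adj F) u w by apply/connect1/adjP; exists f.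
case/or3P: (IHp _ pw lv) => [h|/andP [h1 h2]|/andP [h1 h2]].
- by rewrite (connect_trans cuw h).
- by rewrite (connect_trans cuw h1) h2 orbT.
- by rewrite (connect_trans cuw h1) h2 !orbT.
Qed.

Lemma connect_ends_cycle F e : acyclic F -> e \notin F -> ~~ acyclic (e |: F) ->
  connect (adj F) (ends e).1 (ends e).2.
Proof.
move=> acF eF /forallPn [f]; rewrite negb_imply negbK => /andP [fin cf].
have [fe|fe] := eqVneq f e; first by move: cf; rewrite fe setU1K.
have fF : f \in F by move: fin; rewrite in_setU1 (negbTE fe).
have nc : ~~ connect (adj (F :\ f)) (ends f).1 (ends f).2.
  by move/forallP: acF => /(_ f); rewrite fF.
have eFf : (e |: F) :\ f = e |: (F :\ f).
  by apply/setP => z; rewrite !inE; case: eqP => // ->; rewrite (negbTE fe).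
have symF := connect_adj_sym F; have sub := connectS (subD1set F f).
have cf12 : connect (adj F) (ends f).1 (ends f).2 by apply/connect1/adj_ends.
move: cf; rewrite eFf => /(connect_setU1 (surjective_pairing (ends e))).
rewrite (negbTE nc) /=.
case/orP => /andP [/sub h1 /sub h2].
  rewrite symF in h1; rewrite symF in h2.
  exact: connect_trans h1 (connect_trans cf12 h2).
by rewrite symF in cf12; apply: connect_trans h2 (connect_trans cf12 h1).
Qed.

Lemma basis_connect F : connectedg ends -> is_basis F -> spanning F.
Proof.
move=> /connectedgP cG /andP [acF /forallP maxF] x y.
apply: connect_sub (cG x y) => a b /adjP [e _ he].
have ce : connect (adj F) (ends e).1 (ends e).2.
  have [eF|eF] := boolP (e \in F); first exact/connect1/adj_ends.
  by apply: connect_ends_cycle => //; apply: (implyP (maxF e)).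
by case: he => he; rewrite he /= in ce; rewrite // connect_adj_sym.
Qed.

Lemma spanning_subbasis F : spanning F -> exists2 F0 : {set E}, F0 \subset F & is_basis F0.
Proof.
move=> spF; pose P (F0 : {set E}) := (F0 \subset F) && acyclic F0.
have P0 : P set0 by rewrite /P sub0set acyclic0.
have [F0 /andP [sF0F acF0] maxF0] := @arg_maxnP _ set0 P (fun F0 : {set E} => #|F0|) P0.
have ce e : e \in F -> connect (adj F0) (ends e).1 (ends e).2.
  move=> eF; have [eF0|eF0] := boolP (e \in F0); first exact/connect1/adj_ends.
  apply: connect_ends_cycle => //; apply/negP => acF0e.
  have := maxF0 (e |: F0); rewrite /P acF0e subUset sub1set eF sF0F cardsU1 eF0 /=.
  by rewrite ltnn => /(_ isT).
exists F0 => //; apply/andP; split=> //; apply/forallP => e; apply/implyP => eF0.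
apply/forallPn; exists e; rewrite setU11 /= negbK setU1K //.
apply: connect_sub (spF (ends e).1 (ends e).2) => a b /adjP [f fF hf].
by have := ce f fF; case: hf => -> //=; rewrite connect_adj_sym.
Qed.

Definition component F v := [set w | connect (adj F) v w].
Definition components F := component F @: [set: V].

Lemma component_eq F v w : (component F v == component F w) = connect (adj F) v w.
Proof.
apply/eqP/idP => [compvw|cvw]; last first.
  by apply/setP => z; rewrite !inE (same_connect (connect_adj_sym F) cvw).
have : w \in component F w by rewrite inE connect0.
by rewrite -compvw inE.
Qed.

Lemma components_mem F C v : C \in components F -> v \in C -> C = component F v.
Proof. by case/imsetP => u _ -> vC; apply/eqP; rewrite component_eq -[_ _ v]inE. Qed.

Lemma card_components0 : #|components set0| = #|V|.
Proof.
have component0 v : component set0 v = [set v].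
  apply/setP => w; rewrite !inE; apply/idP/eqP => [/connectP [[|z p] /=]|->].
  - by move=> _ ->.
  - by case/andP => /adjP [e]; rewrite inE.
  - exact: connect0.
by rewrite /components (eq_imset _ component0) card_imset ?cardsT //; apply: set1_inj.
Qed.

Section AddEdge.
Variables (F : {set E}) (e : E).
Let x := (ends e).1.
Let y := (ends e).2.
Let U := component F x :|: component F y.

Lemma component_setU1 v : component (e |: F) v = if v \in U then U else component F v.
Proof.
have symF := connect_adj_sym F.
have cxy : connect (adj (e |: F)) x y by apply/connect1/adj_ends/setU11.
have cUx w : w \in U -> connect (adj (e |: F)) x w.
  rewrite !inE => /orP [] cw; last apply: connect_trans cxy _;
  exact: connectS (subsetUr _ _) _ _ cw.
have cFU w : connect (adj (e |: F)) v w = connect (adj F) v w || (v \in U) && (w \in U).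
  apply/idP/idP => [/(connect_setU1 (surjective_pairing (ends e)))|].
    case/or3P => [->//|/andP [cvx cyw]|/andP [cvy cxw]]; rewrite !inE.
      by rewrite (symF x) cvx cyw !orbT.
    by rewrite (symF y) cvy cxw !orbT.
  case/orP => [|/andP [/cUx cxv /cUx]]; first exact: connectS (subsetUr _ _) _ _.
  by apply: connect_trans; rewrite connect_adj_sym.
apply/setP => w; rewrite [in LHS]inE cFU; case: ifP => vU; last by rewrite andFb orbF inE.
rewrite andTb; apply/orP/idP => [[cvw|//]|wU]; last by right.
by move: vU; rewrite !inE => /orP [] cv; rewrite (connect_trans cv cvw) ?orbT.
Qed.

Lemma card_components_setU1 : ~~ connect (adj F) x y ->
  #|components (e |: F)|.+1 = #|components F|.
Proof.
move=> nxy; have symF := connect_adj_sym F.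
have xU : x \in U by rewrite !inE connect0.
set K := components F :\ component F x :\ component F y.
have defK : components (e |: F) = U |: K.
  apply/setP => C; rewrite in_setU1 !inE; apply/imsetP/orP => [[v _ ->]|].
    rewrite component_setU1; case: ifP => vU; [by left | right].
    move: vU; rewrite !inE (symF x) (symF y) => /negbT /norP [nvx nvy].
    by rewrite !component_eq nvx nvy imset_f.
  case=> [/eqP ->|/and3P [Cy Cx /imsetP [v _ Cv]]].
    by exists x; rewrite ?component_setU1 ?xU.
  exists v => //; rewrite component_setU1 Cv ifF //; apply/negbTE.
  move: Cx Cy; rewrite Cv !component_eq !inE => nvx nvy.
  by rewrite (symF x) (symF y) (negbTE nvx) (negbTE nvy).
have UK : U \notin K.
  apply/negP => /setD1P [_ /setD1P [UX UC]].
  by move: UX; rewrite -(components_mem UC xU) eqxx.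
rewrite defK cardsU1 UK (cardsD1 (component F x) (components F)).
rewrite (cardsD1 (component F y) (components F :\ component F x)) !inE !imset_f //.
by rewrite component_eq symF (negbTE nxy).
Qed.

End AddEdge.

Lemma acyclic_card_components F : acyclic F -> #|F| + #|components F| = #|V|.
Proof.
move: {2}#|F| (erefl #|F|) => n; elim: n F => [|n IHn] F cardF acF.
  by move/eqP: cardF; rewrite cards_eq0 => /eqP ->; rewrite cards0 card_components0.
have [e eF] : exists e, e \in F by apply/card_gt0P; rewrite cardF.
have cardFe : #|F :\ e| = n by move: cardF; rewrite (cardsD1 e) eF => -[].
have nxy : ~~ connect (adj (F :\ e)) (ends e).1 (ends e).2.
  by move/forallP: acF => /(_ e); rewrite eF.
have := IHn _ cardFe (acyclicS (subD1set F e) acF).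
by rewrite -(card_components_setU1 nxy) setD1K // cardFe cardF addSnnS.
Qed.

Lemma card_basis F (v : V) : connectedg ends -> is_basis F -> #|F|.+1 = #|V|.
Proof.
move=> cG bF; have spF := basis_connect cG bF.
rewrite -(acyclic_card_components (proj1 (andP bF))).
suff -> : components F = [set [set: V]] by rewrite cards1 addn1.
apply/setP => C; rewrite inE; apply/imsetP/eqP => [[w _ ->]|->].
  by apply/setP => z; rewrite !inE spF.
by exists v; rewrite ?inE //; apply/setP => z; rewrite !inE spF.
Qed.

Lemma spanning_basis F (v : V) : spanning F -> #|F|.+1 = #|V| -> is_basis F.
Proof.
move=> spF cardF; have [F0 sF0F bF0] := spanning_subbasis spF.
have := card_basis v (spanning_connectedg spF) bF0; rewrite -cardF => -[cardF0].
by suff -> : F = F0 by []; apply/eqP; rewrite eq_sym eqEcard sF0F cardF0 leqnn.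
Qed.

Lemma bases_neq0 : connectedg ends -> bases ends != set0.
Proof.
by move=> /connectedgP /spanning_subbasis [F _ bF]; apply/set0Pn; exists F; rewrite inE.
Qed.

Lemma edges_gt0 : connectedg ends -> #|bases ends| != 1 -> 0 < #|E|.
Proof.
move=> cG; apply: contraR; rewrite -eqn0Ngt => /eqP E0.
have all0 F : F = set0 by apply/eqP; rewrite -cards_eq0 -leqn0 -E0 max_card.
have [F bF] := set0Pn _ (bases_neq0 cG).
apply/cards1P; exists set0; apply/setP => F'.
by rewrite in_set1 (all0 F') eqxx -(all0 F).
Qed.

End GraphFacts.

Section BasisDistance.
Variable T : finType.
Implicit Types (A B X Y : {set T}) (S : {set {set T}}).

Lemma bdist_le A B : bdist A B <= #|A| + #|B|.
Proof.
by apply: leq_trans (leq_card_setU _ _) _; apply: leq_add; apply/subset_leq_card/subsetDl.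
Qed.

Lemma bdist_disjoint A B : [disjoint A & B] -> bdist A B = #|A| + #|B|.
Proof.
move=> dAB; rewrite /bdist (setDidPl dAB) (setDidPl _) 1?disjoint_sym //.
by apply/eqP; rewrite (leq_card_setU A B).
Qed.

Lemma bdist_subset X Y X0 Y0 : X0 \subset X -> Y0 \subset Y ->
  bdist X Y <= bdist X0 Y0 + #|X :\: X0| + #|Y :\: Y0|.
Proof.
move=> /subsetP sX0X /subsetP sY0Y; rewrite /bdist; set D0 := (X0 :\: Y0) :|: _.
apply: (@leq_trans #|D0 :|: (X :\: X0) :|: (Y :\: Y0)|).
  apply/subset_leq_card/subsetP => z; have := sX0X z; have := sY0Y z.
  by rewrite !inE; case: (z \in X0); case: (z \in X); case: (z \in Y0);
     case: (z \in Y) => // /(_ isT).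
apply: leq_trans (leq_card_setU _ _) _; rewrite leq_add2r; exact: leq_card_setU.
Qed.

Lemma bdist_le_diam S A B : A \in S -> B \in S -> bdist A B <= diam S.
Proof.
by move=> AS BS; apply: leq_trans (leq_bigmax_cond _ AS); apply: leq_bigmax_cond BS.
Qed.

Lemma diam_leq S m : (forall A B, A \in S -> B \in S -> bdist A B <= m) -> diam S <= m.
Proof. by move=> leSm; apply/bigmax_leqP => A AS; apply/bigmax_leqP => B BS; apply: leSm. Qed.

Lemma diam_attained S : S != set0 -> exists A B, [/\ A \in S, B \in S & bdist A B = diam S].
Proof.
rewrite -card_gt0 /diam => S0.
have [A AS ->] := eq_bigmax_cond (fun A => \max_(B in S) bdist A B) S0.
by have [B BS ->] := eq_bigmax_cond (bdist A) S0; exists A, B.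
Qed.

Lemma borsuk_part_card1 S k : #|S| = 1 -> ~~ borsuk_part S k.
Proof.
move/eqP/cards1P => [A ->]; apply/existsP => -[P /and3P [partP _ /forallP diamP]].
have : A \in cover P by rewrite (cover_partition partP) set11.
case/bigcupP => C CP _; have := implyP (diamP C) CP.
by rewrite /diam !big_set1 /bdist setDv setU0 cards0.
Qed.

End BasisDistance.

Lemma borsuk_part_pullback (T T' : finType) (bsG : {set {set T}}) (bsH : {set {set T'}})
    (phi : {set T} -> {set T'}) c k :
  {in bsG, forall B, phi B \in bsH} ->
  {in bsG &, forall B B', bdist B B' <= bdist (phi B) (phi B') + c} ->
  diam bsH + c <= diam bsG -> borsuk_part bsH k ->
  exists2 k', k' <= k & borsuk_part bsG k'.
Proof.
move=> phiH dist_phi diam_c /existsP [P /and3P [partP /eqP <- /forallP diamP]].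
pose f B := pblock P (phi B).
have fP B : B \in bsG -> f B \in P.
  by move=> BG; apply: pblock_mem; rewrite (cover_partition partP) phiH.
exists #|preim_partition f bsG|.
  have -> : preim_partition f bsG = (fun C => [set B in bsG | C == f B]) @: (f @: bsG).
    by rewrite /preim_partition /equivalence_partition -imset_comp.
  apply: leq_trans (leq_imset_card _ _) (subset_leq_card _).
  by apply/subsetP => _ /imsetP [B BG ->]; apply: fP.
apply/existsP; exists (preim_partition f bsG); rewrite preim_partitionP eqxx /=.
apply/forallP => S; apply/implyP => /imsetP [B BG ->].
have small := implyP (diamP (f B)) (fP B BG).
have phi_in B' : B' \in bsG -> f B == f B' -> phi B' \in f B.
  by move=> B'G /eqP ->; rewrite mem_pblock (cover_partition partP) phiH.
suff : diam [set B' in bsG | f B == f B'] <= diam (f B) + c.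
  by move/leq_ltn_trans; apply; apply: leq_trans diam_c; rewrite ltn_add2r.
apply: diam_leq => B1 B2; rewrite !inE => /andP [B1G fB1] /andP [B2G fB2].
have := bdist_le_diam (phi_in _ B1G fB1) (phi_in _ B2G fB2).
by have := dist_phi _ _ B1G B2G; lia.
Qed.

Lemma ole_borsuk (T T' : finType) (bsG : {set {set T}}) (bsH : {set {set T'}}) :
  (#|bsH| != 1 -> forall k, borsuk_part bsH k -> exists2 k', k' <= k & borsuk_part bsG k') ->
  ole (borsuk bsG) (borsuk bsH).
Proof.
move=> pullback; rewrite {2}/borsuk.
destruct (boolP (#|bsH| == 1)) as [|bsH1]; first by case: (borsuk _).
case: ex_minnP => k partH _; have [k' k'k partG] := pullback bsH1 k partH.
rewrite /borsuk; destruct (boolP (#|bsG| == 1)) as [bsG1|bsG1].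
  by rewrite (negbTE (borsuk_part_card1 k' (eqP bsG1))) in partG.
by case: ex_minnP => m _ /(_ _ partG) /leq_trans; apply.
Qed.

Section Glue.
Variables (VH EH : finType) (endsH : EH -> VH * VH) (v0 : VH).
Variables (VL EL : finType) (endsL : EL -> VL * VL) (attach : EH -> VL).

Local Notation VG := (VG v0 VL).
Local Notation EG := (EG EH EL).
Local Notation endsG := (endsG endsH v0 endsL attach).
Local Notation glue := (glue_vertex v0 attach).
Implicit Types (S : {set EG}) (A : {set EH}) (T : {set EL}).

Definition contract (a : VG) : VH := if a is inl u then val u else v0.
Definition hedges (S : {set EG}) : {set EH} := [set e | inl e \in S].
Definition ledges (S : {set EG}) : {set EL} := [set l | inr l \in S].
Definition glue_edges (A : {set EH}) (T : {set EL}) : {set EG} :=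
  [set f : EG | match f with inl e => e \in A | inr l => l \in T end].

Lemma hedges_glue A T : hedges (glue_edges A T) = A.
Proof. by apply/setP => e; rewrite !inE. Qed.

Lemma ledges_glue A T : ledges (glue_edges A T) = T.
Proof. by apply/setP => l; rewrite !inE. Qed.

Lemma card_hedges_ledges S : #|S| = #|hedges S| + #|ledges S|.
Proof.
rewrite -!sum1_card big_sumType.
by congr (_ + _); apply: eq_bigl => x; rewrite inE.
Qed.

Lemma bdist_hedges_ledges S S' :
  bdist S S' = bdist (hedges S) (hedges S') + bdist (ledges S) (ledges S').
Proof.
by rewrite /bdist card_hedges_ledges; congr (_ + _); apply: eq_card => x; rewrite !inE.
Qed.

Lemma card_VG : #|VG| = #|VH|.-1 + #|VL|.
Proof. by rewrite card_sum card_sig cardC1. Qed.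

Lemma contract_glue e x : contract (glue e x) = x.
Proof. by rewrite /glue_vertex; case: insubP => [u _ <- //|/negPn/eqP ->]. Qed.

Lemma connect_contract F a b : connect (adj endsG F) a b ->
  connect (adj endsH (hedges F)) (contract a) (contract b).
Proof.
apply: connect_homo => {}a {}b /adjP [[e|l] fF hf].
  have eF : e \in hedges F by rewrite inE.
  have := adj_ends endsH eF; case: hf => -[<- <-]; rewrite !contract_glue.
    exact: connect1.
  by rewrite connect_adj_sym => /connect1.
by case: hf => -[<- <-]; rewrite connect0.
Qed.

Variable w0 : VL.

Definition lift_vertex (x : VH) : VG := if insub x is Some u then inl u else inr w0.

Lemma contract_lift x : contract (lift_vertex x) = x.
Proof. by rewrite /lift_vertex; case: insubP => [u _ <- //|/negPn/eqP ->]. Qed.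

Lemma spanning_hedges S : spanning endsG S -> spanning endsH (hedges S).
Proof.
by move=> spS x y; rewrite -(contract_lift x) -(contract_lift y); apply: connect_contract.
Qed.

Lemma spanning_glue_edges A T : spanning endsH A -> spanning endsL T ->
  spanning endsG (glue_edges A T).
Proof.
move=> spA spT; set F := glue_edges A T; have symF := connect_adj_sym endsG F.
have connL w w' : connect (adj endsG F) (inr w) (inr w').
  apply: connect_homo (spT w w') => {}w {}w' /adjP [l lT hl].
  by apply/connect1/adjP; exists (inr l); rewrite ?inE //=; case: hl => ->; [left | right].
have glue_lift e z : connect (adj endsG F) (glue e z) (lift_vertex z).
  rewrite /glue_vertex /lift_vertex.
  by case: insubP => [u _ _|_]; [apply: connect0 | apply: connL].
have connH : forall x y, connect (adj endsH A) x y ->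
    connect (adj endsG F) (lift_vertex x) (lift_vertex y).
  apply: connect_homo => x y /adjP [e eA he].
  have ce : connect (adj endsG F) (glue e (endsH e).1) (glue e (endsH e).2).
    by apply: connect1; have := @adj_ends _ _ endsG F (inl e); rewrite inE; apply.
  case: he => he; rewrite he /= in ce.
    by apply: connect_trans (connect_trans ce (glue_lift _ _)); rewrite symF.
  by rewrite symF; apply: connect_trans (connect_trans ce (glue_lift _ _)); rewrite symF.
have lift_contract a : connect (adj endsG F) a (lift_vertex (contract a)).
  by case: a => [u|w] /=; rewrite /lift_vertex ?valK ?connect0 // insubF ?eqxx.
move=> a b; apply: connect_trans (lift_contract a) _.
by rewrite symF; apply: connect_trans (lift_contract b) _; rewrite symF connH.
Qed.

Hypotheses (cH : connectedg endsH) (cL : connectedg endsL).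

Lemma connectedg_glue : connectedg endsG.
Proof.
by apply: spanning_connectedg (spanning_glue_edges (connectedgP _ cH) (connectedgP _ cL)).
Qed.

Lemma card_basis_glue B : B \in bases endsG -> #|B|.+1 = #|VH|.-1 + #|VL|.
Proof. by rewrite inE -card_VG; apply: card_basis (inr w0) connectedg_glue. Qed.

Lemma glue_edges_basis A T : A \in bases endsH -> is_basis endsL T ->
  glue_edges A T \in bases endsG.
Proof.
rewrite inE => bA bT; rewrite inE; apply: (spanning_basis (inr w0)).
  by apply: spanning_glue_edges; apply: basis_connect.
rewrite card_hedges_ledges hedges_glue ledges_glue card_VG.
by have := card_basis v0 cH bA; have := card_basis w0 cL bT; lia.
Qed.

Definition proj_basis B : {set EH} := odflt set0 [pick A in bases endsH | A \subset hedges B].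

Lemma proj_basisP B : B \in bases endsG ->
  proj_basis B \in bases endsH /\ proj_basis B \subset hedges B.
Proof.
rewrite inE => bB; rewrite /proj_basis; case: pickP => [A /andP [] //|noA].
have [A sA bA] := spanning_subbasis (spanning_hedges (basis_connect connectedg_glue bB)).
by have := noA A; rewrite inE bA sA.
Qed.

Lemma card_proj_basis_excess B : B \in bases endsG ->
  #|hedges B :\: proj_basis B| + #|ledges B| = #|VL|.-1.
Proof.
move=> bB; have [bA sA] := proj_basisP bB; rewrite inE in bA.
have := card_basis v0 cH bA; have := card_basis_glue bB.
have := subset_leq_card sA; have : 0 < #|VH| by apply/card_gt0P; exists v0.
by rewrite cardsD (setIidPr sA) card_hedges_ledges; lia.
Qed.

Lemma bdist_proj_basis : {in bases endsG &, forall B B',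
  bdist B B' <= bdist (proj_basis B) (proj_basis B') + 2 * #|VL|.-1}.
Proof.
move=> B B' bB bB'; have [_ sA] := proj_basisP bB; have [_ sA'] := proj_basisP bB'.
have := bdist_subset sA sA'; have := bdist_le (ledges B) (ledges B').
have := card_proj_basis_excess bB; have := card_proj_basis_excess bB'.
by rewrite bdist_hedges_ledges; lia.
Qed.

Lemma diam_glue T1 T2 : is_basis endsL T1 -> is_basis endsL T2 -> [disjoint T1 & T2] ->
  diam (bases endsH) + 2 * #|VL|.-1 <= diam (bases endsG).
Proof.
move=> bT1 bT2 dT; have [A1 [A2 [bA1 bA2 <-]]] := diam_attained (bases_neq0 cH).
have := bdist_le_diam (glue_edges_basis bA1 bT1) (glue_edges_basis bA2 bT2).
rewrite bdist_hedges_ledges !hedges_glue !ledges_glue (bdist_disjoint dT).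
by have := card_basis w0 cL bT1; have := card_basis w0 cL bT2; lia.
Qed.

End Glue.

Theorem proposition6p5
  (VH EH : finType) (endsH : EH -> VH * VH) (v0 : VH)
  (VL EL : finType) (endsL : EL -> VL * VL) (attach : EH -> VL) :
  connectedg endsH -> loopless endsH ->
  connectedg endsL ->
  degree endsH v0 <= #|VL| ->
  {in [pred e | incident endsH v0 e] &, injective attach} ->
  (exists B1 B2, [/\ B1 \in bases endsL, B2 \in bases endsL
                   & [disjoint B1 & B2]]) ->
  ole (borsukM (endsG endsH v0 endsL attach)) (borsukM endsH).
Proof.
move=> cH _ cL _ _ [T1 [T2 [bT1 bT2 dT]]]; rewrite !inE in bT1 bT2.
apply: ole_borsuk => bH1 k partH.
have [e0 _] := card_gt0P (edges_gt0 cH bH1).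
have w0 := attach e0.
apply: borsuk_part_pullback (bdist_proj_basis w0 cH cL)
  (diam_glue v0 attach w0 cH cL bT1 bT2 dT) partH.
by move=> B bB; case: (proj_basisP w0 cH cL bB).
Qed.
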